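(* Let $E\subset\mathbb{R}^n$ be an ellipsoid with $\mathrm{vol}(E)<1$. Then $\mathrm{width}(E)\le n$.
   Context: An ellipsoid is a set $\{x\in\mathbb{R}^n: (x-a)^\top (AA^\top)^{-1}(x-a)\le 1\}$ with $A\in\mathbb{R}^{n\times n}$ non-singular and $a\in\mathbb{R}^n$. For a closed set $P$ and $c\in\mathbb{R}^n$, $\mathrm{width}_c(P)=\max_{x\in P}c^\top x-\min_{x\in P}c^\top x$; the lattice width is $\mathrm{width}(P)=\min\{\mathrm{width}_c(P): c\in\mathbb{Z}^n\setminus\{0\}\}$. *)

(* classical reals. Vectors of R^n are functions nat -> R of
   which only the coordinates 0..n-1 are used; n x n matrices are
   nat -> nat -> R (only entries with indices < n are used). *)
From Stdlib Require Import Reals ZArith List.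
Open Scope R_scope.

Definition vec := nat -> R.
Definition mat := nat -> nat -> R.

Fixpoint sumR (n : nat) (f : nat -> R) : R :=
  match n with O => 0 | S k => sumR k f + f k end.

Fixpoint prodR (n : nat) (f : nat -> R) : R :=
  match n with O => 1 | S k => prodR k f * f k end.

Definition mmul (n : nat) (A B : mat) : mat :=
  fun i j => sumR n (fun k => A i k * B k j).
Definition mtr (A : mat) : mat := fun i j => A j i.
Definition mvmul (n : nat) (A : mat) (x : vec) : vec :=
  fun i => sumR n (fun k => A i k * x k).
Definition dot (n : nat) (x y : vec) : R := sumR n (fun k => x k * y k).

Definition is_inverse (n : nat) (M B : mat) : Prop :=
  forall i j, (i < n)%nat -> (j < n)%nat ->
    mmul n M B i j = (if Nat.eqb i j then 1 else 0).

(* The ellipsoid { x : (x-a)^T (A A^T)^{-1} (x-a) <= 1 }, where Minv is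
   the inverse of A A^T. *)
Definition ellipsoid (n : nat) (A Minv : mat) (a : vec) : vec -> Prop :=
  fun x => let d := fun i => x i - a i in dot n d (mvmul n Minv d) <= 1.

Definition box := (vec * vec)%type.
Definition in_box (n : nat) (b : box) (x : vec) : Prop :=
  forall i, (i < n)%nat -> fst b i < x i < snd b i.
Definition box_ok (n : nat) (b : box) : Prop :=
  forall i, (i < n)%nat -> fst b i <= snd b i.
Definition box_vol (n : nat) (b : box) : R := prodR n (fun i => snd b i - fst b i).

(* vol(P) < v, for P compact, via the (Lebesgue = Jordan) outer measure:
   P is covered by finitely many boxes of total volume < v. *)
Definition vol_lt (n : nat) (P : vec -> Prop) (v : R) : Prop :=
  exists bs : list box,
    (forall b, In b bs -> box_ok n b) /\
    (forall x, P x -> exists b, In b bs /\ in_box n b x) /\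
    fold_right (fun b s => box_vol n b + s) 0 bs < v.

Definition zvec := nat -> Z.
Definition zvec_nonzero (n : nat) (c : zvec) : Prop :=
  exists i, (i < n)%nat /\ c i <> 0%Z.
Definition zdot (n : nat) (c : zvec) (x : vec) : R :=
  sumR n (fun k => IZR (c k) * x k).

Definition width_dir_le (n : nat) (c : zvec) (P : vec -> Prop) (w : R) : Prop :=
  forall x y, P x -> P y -> zdot n c x - zdot n c y <= w.

Definition lattice_width_le (n : nat) (P : vec -> Prop) (w : R) : Prop :=
  exists c, zvec_nonzero n c /\ width_dir_le n c P w.

(* Gram-Schmidt orthogonalisation of the rows of A gives A = L Q with L lower
   triangular with positive diagonal and Q orthogonal. The ellipsoid E = a + A B^n then
   contains the sheared cube a + L [-s, s]^n with s = 1/sqrt n, whose volume is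
   prod_k (2 s L_kk); a covering of E by boxes of total volume < 1 therefore forces
   prod_k L_kk < (sqrt n / 2)^n. Minkowski's theorem for the lattice L^T Z^n, proved by
   pigeonholing the points of a fine grid reduced modulo the triangular fundamental
   domain prod_k [0, L_kk), gives a nonzero integer vector c with
   |(L^T c)_k| < sqrt n / 2 for every k. Finally width_c(E) = 2 |A^T c| = 2 |L^T c| < n. *)

From Stdlib Require Import Reals ZArith List.
From Stdlib Require Import Lra Lia Psatz Classical ClassicalEpsilon.
Open Scope R_scope.

Lemma sumR_ext n f g : (forall k, (k < n)%nat -> f k = g k) -> sumR n f = sumR n g.
Proof.
  induction n as [|n IH]; simpl; intros H; auto.
  rewrite IH, H by (auto; intros; apply H; lia). reflexivity.
Qed.

Lemma sumR_plus n f g : sumR n (fun k => f k + g k) = sumR n f + sumR n g.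
Proof. induction n; simpl; [lra|]. rewrite IHn; lra. Qed.

Lemma sumR_minus n f g : sumR n (fun k => f k - g k) = sumR n f - sumR n g.
Proof. induction n; simpl; [lra|]. rewrite IHn; lra. Qed.

Lemma sumR_scal n c f : sumR n (fun k => c * f k) = c * sumR n f.
Proof. induction n; simpl; [lra|]. rewrite IHn; lra. Qed.

Lemma sumR_scalr n c f : sumR n (fun k => f k * c) = sumR n f * c.
Proof. induction n; simpl; [lra|]. rewrite IHn; lra. Qed.

Lemma sumR_eq0 n f : (forall k, (k < n)%nat -> f k = 0) -> sumR n f = 0.
Proof.
  intros H. transitivity (sumR n (fun _ => 0)); [now apply sumR_ext|].
  induction n; simpl; [|rewrite IHn by (intros; apply H; lia)]; lra.
Qed.

Lemma sumR_const n c : sumR n (fun _ => c) = INR n * c.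
Proof. induction n; simpl sumR; [simpl; lra|]. rewrite IHn, S_INR; lra. Qed.

Lemma sumR_le n f g : (forall k, (k < n)%nat -> f k <= g k) -> sumR n f <= sumR n g.
Proof.
  induction n; simpl; intros H; [lra|].
  pose proof (H n ltac:(lia)). pose proof (IHn ltac:(intros; apply H; lia)). lra.
Qed.

Lemma sumR_nonneg n f : (forall k, (k < n)%nat -> 0 <= f k) -> 0 <= sumR n f.
Proof.
  intros H. rewrite <- (sumR_eq0 n (fun _ => 0)) by auto. now apply sumR_le.
Qed.

Lemma sumR_swap n m (f : nat -> nat -> R) :
  sumR n (fun i => sumR m (fun j => f i j)) = sumR m (fun j => sumR n (fun i => f i j)).
Proof.
  induction n; simpl.
  - now rewrite sumR_eq0.
  - now rewrite IHn, <- sumR_plus.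
Qed.

Lemma sumR_delta n j f : (j < n)%nat ->
  sumR n (fun k => if Nat.eqb j k then f k else 0) = f j.
Proof.
  induction n; intros H; [lia|]. simpl.
  destruct (Nat.eq_dec j n) as [->|Hjn].
  - rewrite Nat.eqb_refl, sumR_eq0; [lra|].
    intros k Hk. destruct (Nat.eqb_spec n k); [lia|auto].
  - rewrite IHn by lia. destruct (Nat.eqb_spec j n); [lia|lra].
Qed.

Lemma sumR_trunc n t f : (t <= n)%nat ->
  (forall k, (t <= k < n)%nat -> f k = 0) -> sumR n f = sumR t f.
Proof.
  induction n; intros Ht Hz.
  - now replace t with 0%nat by lia.
  - destruct (Nat.eq_dec t (S n)) as [->|Htn]; [reflexivity|].
    simpl. rewrite IHn, Hz by (auto; lia || (intros; apply Hz; lia)). lra.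
Qed.

Lemma sumR_sq_eq0 n f : sumR n (fun k => f k * f k) = 0 -> forall k, (k < n)%nat -> f k = 0.
Proof.
  induction n; intros H k Hk; [lia|]. simpl in H.
  assert (0 <= sumR n (fun k => f k * f k)) by (apply sumR_nonneg; intros; nra).
  destruct (Nat.eq_dec k n) as [->|Hkn]; [nra|].
  apply IHn; [nra|lia].
Qed.

Lemma cauchy_schwarz n u v :
  (sumR n (fun k => u k * v k)) ^ 2 <=
  sumR n (fun k => u k * u k) * sumR n (fun k => v k * v k).
Proof.
  induction n; simpl in *; [lra|].
  set (B := sumR n (fun k => u k * v k)) in *.
  set (A := sumR n (fun k => u k * u k)) in *.
  set (C := sumR n (fun k => v k * v k)) in *.
  assert (0 <= A) by (apply sumR_nonneg; intros; nra).
  assert (0 <= C) by (apply sumR_nonneg; intros; nra).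
  set (x := u n). set (y := v n).
  (* AM-GM: [(2 B x y)^2 <= 4 A C x^2 y^2 <= (A y^2 + C x^2)^2] *)
  assert (2 * B * x * y <= A * y * y + C * x * x).
  { assert (B * B * (x * y) ^ 2 <= A * C * (x * y) ^ 2)
      by (apply Rmult_le_compat_r; [apply pow2_ge_0|lra]).
    assert (0 <= (A * y * y - C * x * x) ^ 2) by apply pow2_ge_0.
    assert ((2 * B * x * y) ^ 2 <= (A * y * y + C * x * x) ^ 2) by nra.
    assert (0 <= A * y * y + C * x * x) by nra.
    destruct (Rle_dec (2 * B * x * y) 0); nra. }
  nra.
Qed.

Lemma prodR_ext n f g : (forall k, (k < n)%nat -> f k = g k) -> prodR n f = prodR n g.
Proof.
  induction n; simpl; intros H; auto.
  rewrite IHn, H by (auto; intros; apply H; lia). reflexivity.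
Qed.

Lemma prodR_nonneg n f : (forall k, (k < n)%nat -> 0 <= f k) -> 0 <= prodR n f.
Proof.
  induction n; simpl; intros H; [lra|].
  apply Rmult_le_pos; [apply IHn; intros|]; apply H; lia.
Qed.

Lemma prodR_le n f g : (forall k, (k < n)%nat -> 0 <= f k <= g k) -> prodR n f <= prodR n g.
Proof.
  induction n; simpl; intros H; [lra|].
  assert (0 <= prodR n f) by (apply prodR_nonneg; intros; apply H; lia).
  pose proof (IHn ltac:(intros; apply H; lia)).
  pose proof (H n ltac:(lia)).
  apply Rmult_le_compat; lra.
Qed.

Lemma prodR_scal n c f : prodR n (fun k => c * f k) = c ^ n * prodR n f.
Proof. induction n; simpl; [lra|]. rewrite IHn; ring. Qed.

Lemma prodR_div_lt_1 n f d : 0 < d ->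
  prodR n (fun k => f k / d) < 1 <-> prodR n f < d ^ n.
Proof.
  intros Hd. rewrite (prodR_ext n _ (fun k => / d * f k)) by (intros; unfold Rdiv; ring).
  rewrite prodR_scal, pow_inv.
  assert (HD : 0 < d ^ n) by (apply pow_lt; auto).
  pose proof (Rinv_0_lt_compat _ HD) as HD'.
  split; intros Hlt.
  - apply Rmult_lt_compat_r with (r := d ^ n) in Hlt; auto.
    replace (/ d ^ n * prodR n f * d ^ n) with (prodR n f) in Hlt by (field; lra). lra.
  - apply Rmult_lt_compat_l with (r := / d ^ n) in Hlt; auto.
    rewrite Rinv_l in Hlt by lra. exact Hlt.
Qed.

Lemma prodR_add_small n f e : 0 <= e <= 1 -> (forall k, (k < n)%nat -> 0 <= f k) ->
  prodR n (fun k => f k + e) <= prodR n f + e * INR n * prodR n (fun k => f k + 1).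
Proof.
  intros He. induction n; cbn [prodR]; intros H; [simpl; lra|].
  pose proof (IHn ltac:(intros; apply H; lia)).
  set (P := prodR n f) in *. set (Q := prodR n (fun k => f k + 1)) in *.
  assert (0 <= P) by (apply prodR_nonneg; intros; apply H; lia).
  assert (P <= Q) by (apply prodR_le; intros; pose proof (H k ltac:(lia)); lra).
  assert (0 <= prodR n (fun k => f k + e))
    by (apply prodR_nonneg; intros; pose proof (H k ltac:(lia)); lra).
  pose proof (H n ltac:(lia)). pose proof (pos_INR n).
  rewrite S_INR.
  assert (prodR n (fun k => f k + e) * (f n + e) <= (P + e * INR n * Q) * (f n + e))
    by (apply Rmult_le_compat_r; lra).
  assert (0 <= e * INR n * Q) by (apply Rmult_le_pos; nra).
  assert (e * INR n * Q * (f n + e) <= e * INR n * Q * (f n + 1))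
    by (apply Rmult_le_compat_l; lra).
  assert (e * P <= e * Q) by (apply Rmult_le_compat_l; lra).
  assert (0 <= e * Q) by (apply Rmult_le_pos; lra).
  assert (e * Q <= e * Q * (f n + 1)) by nra.
  nra.
Qed.

Lemma dot_comm n u v : dot n u v = dot n v u.
Proof. unfold dot. apply sumR_ext. intros; ring. Qed.

Lemma dot_ext n u u' v v' : (forall i, (i < n)%nat -> u i = u' i /\ v i = v' i) ->
  dot n u v = dot n u' v'.
Proof. intros H. apply sumR_ext. intros i Hi. now destruct (H i Hi) as [-> ->]. Qed.

Lemma dot_nonneg n u : 0 <= dot n u u.
Proof. apply sumR_nonneg. intros; nra. Qed.

Lemma mvmul_mmul n (A B : mat) r i :
  mvmul n (mmul n A B) r i = mvmul n A (mvmul n B r) i.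
Proof.
  unfold mvmul, mmul.
  rewrite (sumR_ext n _ (fun k => sumR n (fun l => A i l * (B l k * r k))))
    by (intros; rewrite <- sumR_scalr; apply sumR_ext; intros; ring).
  rewrite sumR_swap. apply sumR_ext. intros; now rewrite sumR_scal.
Qed.

Lemma dot_mvmul_tr n (A : mat) p r : dot n p (mvmul n A r) = dot n (mvmul n (mtr A) p) r.
Proof.
  unfold dot, mvmul, mtr.
  rewrite (sumR_ext n _ (fun i => sumR n (fun k => p i * A i k * r k)))
    by (intros; rewrite <- sumR_scal; apply sumR_ext; intros; ring).
  rewrite sumR_swap. apply sumR_ext. intros; rewrite <- sumR_scalr. apply sumR_ext; intros; ring.
Qed.

Lemma dot_AAt n (A : mat) p r :
  dot n p (mvmul n (mmul n A (mtr A)) r) = dot n (mvmul n (mtr A) p) (mvmul n (mtr A) r).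
Proof.
  rewrite <- dot_mvmul_tr. apply dot_ext. intros; split; [reflexivity|apply mvmul_mmul].
Qed.

Lemma mvmul_delta n (r : vec) i : (i < n)%nat ->
  sumR n (fun k => (if Nat.eqb i k then 1 else 0) * r k) = r i.
Proof.
  intros Hi. rewrite <- (sumR_delta n i r Hi). apply sumR_ext. intros k _.
  destruct (Nat.eqb i k); ring.
Qed.

Section Inverse.

Variables (n : nat) (A Minv : mat).
Hypothesis Hinv : is_inverse n Minv (mmul n A (mtr A)).
Local Notation M := (mmul n A (mtr A)).

Lemma inverse_left w i : (i < n)%nat -> mvmul n Minv (mvmul n M w) i = w i.
Proof.
  intros Hi. rewrite <- mvmul_mmul, <- (mvmul_delta n w i Hi).
  apply sumR_ext. intros k Hk. now rewrite Hinv.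
Qed.

Lemma AAt_sym k l : M k l = M l k.
Proof. unfold mmul, mtr. apply sumR_ext. intros; ring. Qed.

Lemma inverse_sym i j : (i < n)%nat -> (j < n)%nat -> Minv i j = Minv j i.
Proof.
  intros Hi Hj.
  (* both sides equal [(Minv M Minv^T) j i], as [M] is symmetric *)
  transitivity (sumR n (fun l => sumR n (fun k => Minv j k * M k l) * Minv i l)).
  { rewrite <- (sumR_delta n j (fun l => Minv i l)) by auto.
    apply sumR_ext. intros l Hl. change (sumR n _) with (mmul n Minv M j l).
    rewrite Hinv by auto. destruct (Nat.eqb j l); ring. }
  rewrite (sumR_ext n _ (fun l => sumR n (fun k => Minv j k * (Minv i l * M l k))))
    by (intros; rewrite <- sumR_scalr; apply sumR_ext; intros; rewrite AAt_sym; ring).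
  rewrite sumR_swap, <- (sumR_delta n i (fun k => Minv j k)) by auto.
  apply sumR_ext. intros k Hk. rewrite sumR_scal.
  change (sumR n _) with (mmul n Minv M i k). rewrite Hinv by auto.
  destruct (Nat.eqb i k); ring.
Qed.

Lemma inverse_right d i : (i < n)%nat -> mvmul n M (mvmul n Minv d) i = d i.
Proof.
  intros Hi. rewrite <- mvmul_mmul, <- (mvmul_delta n d i Hi).
  apply sumR_ext. intros k Hk. f_equal. unfold mmul at 1.
  rewrite (sumR_ext n _ (fun l => Minv k l * M l i))
    by (intros; rewrite AAt_sym, inverse_sym by auto; ring).
  change (sumR n _) with (mmul n Minv M k i). rewrite Hinv by auto.
  now rewrite Nat.eqb_sym.
Qed.

Lemma tr_kernel_trivial w : (forall j, (j < n)%nat -> mvmul n (mtr A) w j = 0) ->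
  forall i, (i < n)%nat -> w i = 0.
Proof.
  intros Hw i Hi.
  assert (HMw : forall k, (k < n)%nat -> mvmul n M w k = 0).
  { intros k Hk. rewrite mvmul_mmul. unfold mvmul at 1.
    apply sumR_eq0. intros j Hj. rewrite Hw by auto. ring. }
  rewrite <- (inverse_left w i Hi). unfold mvmul at 1.
  apply sumR_eq0. intros k Hk. rewrite HMw by auto. ring.
Qed.

Lemma ellipsoid_dir_sq_le p d :
  (dot n p d) ^ 2 <=
  dot n (mvmul n (mtr A) p) (mvmul n (mtr A) p) * dot n d (mvmul n Minv d).
Proof.
  set (w := mvmul n Minv d).
  replace (dot n p d) with (dot n p (mvmul n M w))
    by (apply dot_ext; intros; split; try apply inverse_right; auto).
  replace (dot n d w) with (dot n w (mvmul n M w))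
    by (rewrite dot_comm; apply dot_ext; intros; split; try apply inverse_right; auto).
  rewrite !dot_AAt. apply cauchy_schwarz.
Qed.

Lemma ellipsoid_image_le d u : (forall i, (i < n)%nat -> d i = mvmul n A u i) ->
  dot n d (mvmul n Minv d) <= dot n u u.
Proof.
  intros Hd. set (w := mvmul n Minv d). set (v := mvmul n (mtr A) w).
  assert (Huv : dot n d w = dot n u v).
  { rewrite dot_comm, (dot_ext n w w d (mvmul n A u)) by auto.
    now rewrite dot_mvmul_tr, dot_comm. }
  assert (Hvv : dot n v v = dot n d w).
  { unfold v. rewrite <- dot_AAt, dot_comm.
    apply dot_ext. intros; split; try apply inverse_right; auto. }
  (* [s := u.v = v.v] satisfies [s^2 <= (u.u) s] by Cauchy-Schwarz *)
  pose proof (cauchy_schwarz n u v) as Hcs. fold (dot n u v) (dot n u u) (dot n v v) in Hcs.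
  pose proof (dot_nonneg n u). pose proof (dot_nonneg n v).
  rewrite Huv in *. nra.
Qed.

End Inverse.

(** * Gram-Schmidt orthogonalisation *)

Definition lower_triangular (n : nat) (L : mat) : Prop :=
  forall i k, (i < k < n)%nat -> L i k = 0.

Definition orthonormal_rows (n : nat) (Q : mat) : Prop :=
  forall k l, (k < n)%nat -> (l < n)%nat -> dot n (Q k) (Q l) = if Nat.eqb k l then 1 else 0.

Definition unit_lower (t : nat) (L : mat) : Prop :=
  forall k, (k < t)%nat -> L k k = 1 /\ forall i, (k < i)%nat -> L k i = 0.

Definition orthogonal_rows (t n : nat) (b : mat) : Prop :=
  forall k l, (k < t)%nat -> (l < t)%nat -> k <> l -> dot n (b k) (b l) = 0.

Definition upd {X : Type} (f : nat -> X) (t : nat) (v : X) : nat -> X :=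
  fun k => if Nat.eqb k t then v else f k.

Lemma upd_eq {X} (f : nat -> X) t v : upd f t v t = v.
Proof. unfold upd. now rewrite Nat.eqb_refl. Qed.

Lemma upd_neq {X} (f : nat -> X) t v k : k <> t -> upd f t v k = f k.
Proof. intros H. unfold upd. now destruct (Nat.eqb_spec k t). Qed.

Definition proj_coef (n : nat) (v u : vec) : R := dot n v u / dot n u u.

Lemma residual_orthogonal n t (b : mat) (v : vec) : orthogonal_rows t n b ->
  forall i, (i < t)%nat ->
  dot n (fun j => v j - sumR t (fun l => proj_coef n v (b l) * b l j)) (b i) = 0.
Proof.
  intros Horth i Hi. unfold dot.
  rewrite (sumR_ext n _ (fun j =>
             v j * b i j - sumR t (fun l => proj_coef n v (b l) * (b l j * b i j))))
    by (intros; rewrite Rmult_minus_distr_r, <- sumR_scalr;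
        f_equal; apply sumR_ext; intros; ring).
  rewrite sumR_minus, sumR_swap.
  rewrite (sumR_ext t _ (fun l =>
             if Nat.eqb i l then proj_coef n v (b l) * dot n (b l) (b l) else 0)).
  2:{ intros l Hl. rewrite sumR_scal. fold (dot n (b l) (b i)).
      destruct (Nat.eqb_spec i l) as [->|]; [reflexivity|].
      rewrite Horth by auto. ring. }
  rewrite sumR_delta by auto. fold (dot n v (b i)). unfold proj_coef.
  destruct (Req_dec (dot n (b i) (b i)) 0) as [Hz|Hz].
  - (* [b i = 0]: the coefficient [_ / 0] is junk, but it multiplies [b i] *)
    pose proof (sumR_sq_eq0 n (b i) Hz) as Hb.
    replace (dot n v (b i)) with 0
      by (symmetry; apply sumR_eq0; intros k Hk; rewrite Hb by auto; ring).
    rewrite Hz. ring.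
  - field. auto.
Qed.

Lemma unit_lower_upd t L r : unit_lower t L -> r t = 1 ->
  (forall i, (t < i)%nat -> r i = 0) -> unit_lower (S t) (upd L t r).
Proof.
  intros HL Ht Hi k Hk. destruct (Nat.eq_dec k t) as [->|Hkt].
  - now rewrite upd_eq.
  - rewrite upd_neq by auto. apply HL. lia.
Qed.

Lemma orthogonal_rows_upd t n b r : orthogonal_rows t n b ->
  (forall i, (i < t)%nat -> dot n r (b i) = 0) -> orthogonal_rows (S t) n (upd b t r).
Proof.
  intros Horth Hr k l Hk Hl Hkl.
  destruct (Nat.eq_dec k t) as [->|Hkt]; destruct (Nat.eq_dec l t) as [->|Hlt]; try lia.
  - rewrite upd_eq, upd_neq by auto. apply Hr. lia.
  - rewrite upd_eq, upd_neq, dot_comm by auto. apply Hr. lia.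
  - rewrite !upd_neq by auto. apply Horth; lia.
Qed.

Lemma gram_schmidt n (A : mat) t : (t <= n)%nat ->
  exists b L T : mat, unit_lower t L /\ unit_lower t T /\ orthogonal_rows t n b /\
    forall k j, (k < t)%nat -> (j < n)%nat ->
      A k j = mmul n L b k j /\ b k j = mmul n T A k j.
Proof.
  induction t as [|t IH]; intros Ht.
  { exists (fun _ _ => 0), (fun _ _ => 0), (fun _ _ => 0).
    split; [|split; [|split]]; unfold unit_lower, orthogonal_rows; intros; lia. }
  destruct IH as [b [L [T [HL [HT [Horth HLT]]]]]]; [lia|].
  set (mu l := proj_coef n (A t) (b l)).
  set (r j := A t j - sumR t (fun l => mu l * b l j)).
  set (rL i := if Nat.ltb i t then mu i else if Nat.eqb i t then 1 else 0).
  set (rT i := (if Nat.eqb t i then 1 else 0) - sumR t (fun l => mu l * T l i)).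
  assert (HTt : forall i, (t <= i)%nat -> sumR t (fun l => mu l * T l i) = 0).
  { intros i Hi. apply sumR_eq0. intros l Hl. rewrite (proj2 (HT l Hl)) by lia. ring. }
  exists (upd b t r), (upd L t rL), (upd T t rT). split; [|split; [|split]].
  - apply unit_lower_upd; auto; unfold rL.
    + now rewrite Nat.ltb_irrefl, Nat.eqb_refl.
    + intros i Hi. destruct (Nat.ltb_spec i t), (Nat.eqb_spec i t); auto; lia.
  - apply unit_lower_upd; auto; unfold rT.
    + rewrite Nat.eqb_refl, HTt by lia. ring.
    + intros i Hi. rewrite HTt by lia. destruct (Nat.eqb_spec t i); [lia|ring].
  - apply orthogonal_rows_upd; auto. now apply residual_orthogonal.
  - intros k j Hk Hj. unfold mmul. destruct (Nat.eq_dec k t) as [->|Hkt]; [split|].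
    + rewrite upd_eq, (sumR_trunc n (S t)) by
        (lia || (intros i Hi; unfold rL; destruct (Nat.ltb_spec i t), (Nat.eqb_spec i t);
                 [lia..|ring])).
      cbn [sumR]. unfold rL. rewrite Nat.ltb_irrefl, Nat.eqb_refl, upd_eq.
      rewrite (sumR_ext t _ (fun i => mu i * b i j)).
      * unfold r. ring.
      * intros i Hi. destruct (Nat.ltb_spec i t); [|lia]. rewrite upd_neq by lia. reflexivity.
    + rewrite !upd_eq. unfold rT.
      rewrite (sumR_ext n _ (fun i => (if Nat.eqb t i then 1 else 0) * A i j -
                                      sumR t (fun l => mu l * (T l i * A i j))))
        by (intros; rewrite Rmult_minus_distr_r, <- sumR_scalr; f_equal;
            apply sumR_ext; intros; ring).
      rewrite sumR_minus, mvmul_delta, sumR_swap by lia. unfold r. f_equal.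
      apply sumR_ext. intros l Hl. rewrite sumR_scal. f_equal.
      exact (proj2 (HLT l j Hl Hj)).
    + assert (Hk' : (k < t)%nat) by lia. destruct (HLT k j Hk' Hj) as [HA HbT].
      rewrite !upd_neq by auto. split; [|exact HbT].
      rewrite HA. apply sumR_ext. intros i Hi.
      destruct (Nat.lt_ge_cases i t) as [Hit|Hit].
      * rewrite upd_neq by lia. reflexivity.
      * rewrite (proj2 (HL k Hk')) by lia. ring.
Qed.

Section Orthonormal.

Variables (n : nat) (Q : mat).
Hypothesis HQ : orthonormal_rows n Q.

Lemma orthonormal_QQt r i : (i < n)%nat -> mvmul n Q (mvmul n (mtr Q) r) i = r i.
Proof.
  intros Hi. rewrite <- mvmul_mmul, <- (mvmul_delta n r i Hi).
  apply sumR_ext. intros k Hk. f_equal. exact (HQ i k Hi Hk).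
Qed.

Lemma orthonormal_tr_dot p r : dot n (mvmul n (mtr Q) p) (mvmul n (mtr Q) r) = dot n p r.
Proof.
  rewrite <- dot_mvmul_tr. apply dot_ext. intros i Hi.
  split; [reflexivity|]. now apply orthonormal_QQt.
Qed.

End Orthonormal.

Lemma lq_decomposition n (A Minv : mat) : is_inverse n Minv (mmul n A (mtr A)) ->
  exists L Q : mat, lower_triangular n L /\ (forall k, (k < n)%nat -> 0 < L k k) /\
    orthonormal_rows n Q /\
    forall i j, (i < n)%nat -> (j < n)%nat -> A i j = mmul n L Q i j.
Proof.
  intros Hinv.
  destruct (gram_schmidt n A n (le_n n)) as [b [L [T [HL [HT [Horth HLT]]]]]].
  assert (Hb : forall k, (k < n)%nat -> 0 < dot n (b k) (b k)).
  { intros k Hk. destruct (dot_nonneg n (b k)) as [|Hz]; auto. exfalso.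
    (* [b k = A^T (T k)] and [T k k = 1], but the kernel of [A^T] is trivial *)
    assert (HTk : forall j, (j < n)%nat -> mvmul n (mtr A) (T k) j = 0).
    { intros j Hj. unfold mvmul, mtr.
      rewrite (sumR_ext n _ (fun i => T k i * A i j)) by (intros; ring).
      change (sumR n _) with (mmul n T A k j). rewrite <- (proj2 (HLT k j Hk Hj)).
      now apply (sumR_sq_eq0 n (b k)). }
    pose proof (tr_kernel_trivial n A Minv Hinv (T k) HTk k Hk) as HT0.
    rewrite (proj1 (HT k Hk)) in HT0. lra. }
  set (g k := sqrt (dot n (b k) (b k))).
  assert (Hg : forall k, (k < n)%nat -> g k <> 0)
    by (intros; apply Rgt_not_eq, sqrt_lt_R0; auto).
  exists (fun i k => L i k * g k), (fun k j => b k j / g k). split; [|split; [|split]].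
  - intros i k Hik. rewrite (proj2 (HL i ltac:(lia))) by lia. ring.
  - intros k Hk. rewrite (proj1 (HL k Hk)), Rmult_1_l. apply sqrt_lt_R0; auto.
  - intros k l Hk Hl. unfold dot.
    rewrite (sumR_ext n _ (fun j => / (g k * g l) * (b k j * b l j)))
      by (intros; field; split; auto).
    rewrite sumR_scal. fold (dot n (b k) (b l)).
    destruct (Nat.eqb_spec k l) as [<-|Hkl].
    + unfold g. rewrite sqrt_sqrt by apply dot_nonneg. field. apply Rgt_not_eq, Hb; auto.
    + rewrite Horth by auto. ring.
  - intros i j Hi Hj. rewrite (proj1 (HLT i j Hi Hj)). unfold mmul.
    apply sumR_ext. intros k Hk. field. auto.
Qed.

Section LQ.

Variables (n : nat) (A L Q : mat).
Hypothesis HA : forall i j, (i < n)%nat -> (j < n)%nat -> A i j = mmul n L Q i j.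
Hypothesis HQ : orthonormal_rows n Q.

Lemma lq_tr_mvmul p j : (j < n)%nat ->
  mvmul n (mtr A) p j = mvmul n (mtr Q) (mvmul n (mtr L) p) j.
Proof.
  intros Hj. rewrite <- mvmul_mmul. apply sumR_ext. intros k Hk.
  unfold mtr at 1. rewrite HA by auto. unfold mmul, mtr. 
  apply f_equal2; [|reflexivity]. apply sumR_ext. intros; ring.
Qed.

Lemma lq_mvmul y i : (i < n)%nat -> mvmul n A (mvmul n (mtr Q) y) i = mvmul n L y i.
Proof.
  intros Hi. transitivity (mvmul n (mmul n L Q) (mvmul n (mtr Q) y) i).
  - apply sumR_ext. intros j Hj. now rewrite HA.
  - rewrite mvmul_mmul. apply sumR_ext. intros k Hk. now rewrite orthonormal_QQt.
Qed.

End LQ.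

(** * Volume of sheared boxes *)

Definition indic (P : Prop) : R := if excluded_middle_informative P then 1 else 0.

Lemma indic_T (P : Prop) : P -> indic P = 1.
Proof. intros H; unfold indic; destruct excluded_middle_informative; tauto. Qed.

Lemma indic_F (P : Prop) : ~ P -> indic P = 0.
Proof. intros H; unfold indic; destruct excluded_middle_informative; tauto. Qed.

Lemma indic_01 (P : Prop) : 0 <= indic P <= 1.
Proof. unfold indic; destruct excluded_middle_informative; lra. Qed.

Lemma indic_and (P Q : Prop) : indic (P /\ Q) = indic P * indic Q.
Proof. unfold indic; repeat destruct excluded_middle_informative; tauto || lra. Qed.

Lemma indic_iff (P Q : Prop) : (P <-> Q) -> indic P = indic Q.
Proof. intros H; unfold indic; repeat destruct excluded_middle_informative; tauto. Qed.

Definition lsum {X : Type} (l : list X) (f : X -> R) : R :=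
  fold_right (fun x s => f x + s) 0 l.

Lemma lsum_plus {X} (l : list X) f g : lsum l (fun x => f x + g x) = lsum l f + lsum l g.
Proof. induction l; simpl; [lra|]. rewrite IHl; lra. Qed.

Lemma lsum_scal {X} (l : list X) c f : lsum l (fun x => c * f x) = c * lsum l f.
Proof. induction l; simpl; [lra|]. rewrite IHl; lra. Qed.

Lemma lsum_ext {X} (l : list X) f g : (forall x, In x l -> f x = g x) -> lsum l f = lsum l g.
Proof. induction l; simpl; intros H; auto. rewrite H, IHl; auto. Qed.

Lemma lsum_le {X} (l : list X) f g : (forall x, In x l -> f x <= g x) -> lsum l f <= lsum l g.
Proof.
  induction l; simpl; intros H; [lra|].
  pose proof (H a (or_introl eq_refl)). pose proof (IHl (fun x Hx => H x (or_intror Hx))). lra.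
Qed.

Lemma lsum_nonneg {X} (l : list X) f : (forall x, In x l -> 0 <= f x) -> 0 <= lsum l f.
Proof.
  induction l; simpl; intros H; [lra|].
  pose proof (H a (or_introl eq_refl)). pose proof (IHl (fun x Hx => H x (or_intror Hx))). lra.
Qed.

Lemma lsum_ge_term {X} (l : list X) f x0 : In x0 l -> (forall x, In x l -> 0 <= f x) ->
  f x0 <= lsum l f.
Proof.
  induction l as [|x l IH]; simpl; intros Hin H; [tauto|].
  pose proof (lsum_nonneg l f (fun x Hx => H x (or_intror Hx))).
  pose proof (H x (or_introl eq_refl)).
  destruct Hin as [<-|Hin]; [lra|].
  pose proof (IH Hin (fun x Hx => H x (or_intror Hx))). lra.
Qed.

Lemma lsum_sumR {X} (l : list X) N (f : nat -> X -> R) :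
  sumR N (fun k => lsum l (f k)) = lsum l (fun x => sumR N (fun k => f k x)).
Proof.
  induction l; simpl.
  - now apply sumR_eq0.
  - now rewrite sumR_plus, IHl.
Qed.

Lemma progression_count_le (lo hi al h : R) N : 0 < h ->
  h * sumR (S N) (fun k => indic (lo < al + INR k * h < hi)) <=
  Rmax 0 (Rmin hi (al + INR N * h) - lo + h).
Proof.
  intros Hh. induction N.
  - cbn [sumR]. replace (al + INR 0 * h) with al by (simpl; ring).
    destruct (classic (lo < al < hi)) as [Hi|Hi];
      [rewrite indic_T | rewrite indic_F]; auto;
      unfold Rmax, Rmin; repeat destruct Rle_dec; lra.
  - change (sumR (S (S N)) ?f) with (sumR (S N) f + f (S N)).
    rewrite Rmult_plus_distr_l, S_INR.
    destruct (classic (lo < al + (INR N + 1) * h < hi)) as [Hi|Hi];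
      [rewrite indic_T | rewrite indic_F]; auto;
      revert IHN; unfold Rmax, Rmin; repeat destruct Rle_dec; intros; nra.
Qed.

Lemma progression_cover_bound {X} (l : list X) (w lo hi : X -> R) al h N : 0 < h ->
  (forall x, In x l -> 0 <= w x /\ lo x <= hi x) ->
  (forall k, (k <= N)%nat ->
     1 <= lsum l (fun x => w x * indic (lo x < al + INR k * h < hi x))) ->
  INR (S N) * h <= lsum l (fun x => w x * (hi x - lo x + h)).
Proof.
  intros Hh Hl Hcov.
  apply Rle_trans with
    (h * sumR (S N) (fun k => lsum l (fun x => w x * indic (lo x < al + INR k * h < hi x)))).
  { rewrite Rmult_comm. apply Rmult_le_compat_l; [lra|].
    rewrite <- (Rmult_1_r (INR _)), <- sumR_const. apply sumR_le. intros k Hk.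
    apply Hcov. lia. }
  rewrite lsum_sumR, <- lsum_scal. apply lsum_le. intros x Hx.
  destruct (Hl x Hx) as [Hw Hlh].
  rewrite sumR_scal, <- Rmult_assoc, (Rmult_comm h), Rmult_assoc.
  apply Rmult_le_compat_l; auto.
  eapply Rle_trans; [apply (progression_count_le (lo x) (hi x) al h N Hh)|].
  unfold Rmax, Rmin; repeat destruct Rle_dec; lra.
Qed.

Lemma interval_cover_length {X} (l : list X) (w lo hi : X -> R) (al ell : R) :
  (forall x, In x l -> 0 <= w x /\ lo x <= hi x) -> 0 <= ell ->
  (forall t, al <= t <= al + ell -> 1 <= lsum l (fun x => w x * indic (lo x < t < hi x))) ->
  ell <= lsum l (fun x => w x * (hi x - lo x)).
Proof.
  intros Hl Hell Hcov.
  set (V := lsum l (fun x => w x * (hi x - lo x))).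
  set (W := lsum l w).
  assert (HW : 0 <= W) by (apply lsum_nonneg; intros; apply Hl; auto).
  assert (HV : 0 <= V) by (apply lsum_nonneg; intros x Hx; pose proof (Hl x Hx); nra).
  apply Rnot_lt_le. intros Hlt.
  (* sampling [N + 1] equally spaced points of [al, al + ell] gives
     [(N + 1) ell <= N V + ell W] for every [N] *)
  destruct (INR_archimed (ell - V) (ell * W)) as [N HN]; [lra|].
  assert (HN0 : 0 < INR N) by (destruct N; [simpl in HN; nra | apply lt_0_INR; lia]).
  set (h := ell / INR N).
  assert (Hh : 0 < h) by (apply Rdiv_lt_0_compat; lra).
  pose proof (progression_cover_bound l w lo hi al h N Hh Hl) as Hsum.
  rewrite (lsum_ext l _ (fun x => w x * (hi x - lo x) + h * w x)),
    lsum_plus, lsum_scal, S_INR in Hsum by (intros; ring).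
  fold V W in Hsum.
  assert (HNh : INR N * h = ell) by (unfold h; field; lra).
  specialize (Hsum ltac:(intros k Hk; apply Hcov;
    assert (INR k <= INR N) by (apply le_INR; lia); pose proof (pos_INR k); split; nra)).
  apply Rmult_le_compat_l with (r := INR N) in Hsum; [|lra].
  nra.
Qed.

(* the first [t] coordinates of the points [a + L y], [|y_k| <= s], with [L] read as
   lower triangular *)
Definition sheared_box (a : vec) (L : mat) (s : R) (t : nat) (x : vec) : Prop :=
  exists y : vec, forall i, (i < t)%nat ->
    - s <= y i <= s /\ x i = a i + sumR (S i) (fun k => L i k * y k).

Lemma sheared_box_fiber a L s t x y tau : 0 < L t t ->
  (forall i, (i < t)%nat -> - s <= y i <= s /\ x i = a i + sumR (S i) (fun k => L i k * y k)) ->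
  - (s * L t t) <= tau - (a t + sumR t (fun k => L t k * y k)) <= s * L t t ->
  sheared_box a L s (S t) (upd x t tau).
Proof.
  intros HLt Hy Htau.
  set (r := sumR t (fun k => L t k * y k)) in *.
  exists (upd y t ((tau - (a t + r)) / L t t)).
  intros i Hi. destruct (Nat.eq_dec i t) as [->|Hit].
  - cbn [sumR]. rewrite !upd_eq.
    rewrite (sumR_ext t _ (fun k => L t k * y k))
      by (intros k Hk; rewrite upd_neq by lia; reflexivity).
    fold r. split; [|field; lra].
    split; apply Rmult_le_reg_l with (L t t); auto;
      replace (L t t * ((tau - (a t + r)) / L t t)) with (tau - (a t + r)) by (field; lra);
      nra.
  - rewrite !upd_neq by auto. destruct (Hy i ltac:(lia)) as [Hyi ->]. split; auto.
    f_equal. apply sumR_ext. intros k Hk. rewrite upd_neq by lia. reflexivity.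
Qed.

Lemma in_box_upd t (e : box) x v :
  in_box (S t) e (upd x t v) <-> in_box t e x /\ fst e t < v < snd e t.
Proof.
  split.
  - intros Hb. split.
    + intros i Hi. specialize (Hb i ltac:(lia)). now rewrite upd_neq in Hb by lia.
    + specialize (Hb t ltac:(lia)). now rewrite upd_eq in Hb.
  - intros [Hb Ht] i Hi. destruct (Nat.eq_dec i t) as [->|Hit].
    + now rewrite upd_eq.
    + rewrite upd_neq by auto. apply Hb. lia.
Qed.

Lemma box_vol_nonneg t e : box_ok t e -> 0 <= box_vol t e.
Proof. intros H. apply prodR_nonneg. intros k Hk. pose proof (H k Hk). lra. Qed.

Lemma sheared_box_fiber_cover a L s t (l : list box) (w : box -> R) x y :
  0 <= s -> 0 < L t t ->
  (forall e, In e l -> 0 <= w e /\ box_ok (S t) e) ->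
  (forall x', sheared_box a L s (S t) x' ->
     1 <= lsum l (fun e => w e * indic (in_box (S t) e x'))) ->
  (forall i, (i < t)%nat -> - s <= y i <= s /\ x i = a i + sumR (S i) (fun k => L i k * y k)) ->
  2 * s * L t t <= lsum l (fun e => w e * indic (in_box t e x) * (snd e t - fst e t)).
Proof.
  intros Hs HLt Hl Hcov Hy.
  apply interval_cover_length with (al := a t + sumR t (fun k => L t k * y k) - s * L t t).
  - intros e He. destruct (Hl e He) as [Hw Hok]. pose proof (Hok t ltac:(lia)).
    pose proof (indic_01 (in_box t e x)). split; [nra|lra].
  - nra.
  - intros tau Htau.
    assert (Hx' : sheared_box a L s (S t) (upd x t tau))
      by (apply (sheared_box_fiber a L s t x y tau); auto; lra).
    eapply Rle_trans; [exact (Hcov _ Hx')|]. right.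
    apply lsum_ext. intros e _.
    rewrite (indic_iff _ _ (in_box_upd t e x tau)), indic_and. ring.
Qed.

Lemma sheared_box_cover_vol (a : vec) (L : mat) (s : R) : 0 <= s ->
  forall t (l : list box) (w : box -> R),
  (forall i, (i < t)%nat -> 0 <= L i i) ->
  (forall e, In e l -> 0 <= w e /\ box_ok t e) ->
  (forall x, sheared_box a L s t x -> 1 <= lsum l (fun e => w e * indic (in_box t e x))) ->
  prodR t (fun i => 2 * s * L i i) <= lsum l (fun e => w e * box_vol t e).
Proof.
  intros Hs t. induction t as [|t IH]; intros l w HL Hl Hcov.
  { (* every point lies in every 0-dimensional box *)
    rewrite (lsum_ext l _ (fun e => w e * indic (in_box 0 e (fun _ => 0)))).
    - apply Hcov. exists (fun _ => 0). intros i Hi; lia.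
    - intros e _. rewrite indic_T; [reflexivity | intros i Hi; lia]. }
  cbn [prodR]. set (ell := 2 * s * L t t).
  assert (Hw : forall e, In e l -> 0 <= w e) by (intros e He; apply Hl; auto).
  assert (Hlen : forall e, In e l -> 0 <= snd e t - fst e t)
    by (intros e He; pose proof (proj2 (Hl e He) t ltac:(lia)); lra).
  assert (Hok : forall e, In e l -> box_ok t e)
    by (intros e He i Hi; apply Hl; auto).
  rewrite (lsum_ext l _ (fun e => w e * (snd e t - fst e t) * box_vol t e))
    by (intros; unfold box_vol; cbn [prodR]; ring).
  pose proof (HL t ltac:(lia)) as HLt.
  destruct (Req_dec ell 0) as [Hell0|Hell0].
  { rewrite Hell0, Rmult_0_r. apply lsum_nonneg. intros e He.
    pose proof (box_vol_nonneg t e (Hok e He)).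
    pose proof (Hw e He). pose proof (Hlen e He).
    apply Rmult_le_pos; [apply Rmult_le_pos|]; auto. }
  assert (Hell : 0 < ell) by (unfold ell in *; destruct Hs, HLt; nra).
  (* slice along the last coordinate: the fibre of each [x] of the [t]-dimensional
     sheared box carries total weight at least [ell], so the rescaled weights [w']
     satisfy the hypothesis in dimension [t] *)
  set (w' e := w e * (snd e t - fst e t) / ell).
  assert (IH' : prodR t (fun i => 2 * s * L i i) <= lsum l (fun e => w' e * box_vol t e)).
  { apply IH.
    - intros i Hi. apply HL. lia.
    - intros e He. split; [|auto].
      apply Rle_mult_inv_pos; auto. apply Rmult_le_pos; auto.
    - intros x [y Hy].
      apply Rmult_le_reg_l with ell; auto. rewrite Rmult_1_r.
      eapply Rle_trans;
        [apply (sheared_box_fiber_cover a L s t l w x y); auto; unfold ell in *; nra|].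
      right. rewrite <- lsum_scal. apply lsum_ext. intros e _. unfold w'. field. lra. }
  apply Rmult_le_compat_r with (r := ell) in IH'; [|lra].
  eapply Rle_trans; [exact IH'|]. right.
  rewrite Rmult_comm, <- lsum_scal. apply lsum_ext. intros e _. unfold w'. field. lra.
Qed.

Lemma vol_lt_sheared_box n (P : vec -> Prop) v a L s : 0 <= s ->
  (forall i, (i < n)%nat -> 0 <= L i i) ->
  (forall x, sheared_box a L s n x -> P x) ->
  vol_lt n P v -> prodR n (fun i => 2 * s * L i i) < v.
Proof.
  intros Hs HL Hsub [bs [Hok [Hcov Hv]]].
  eapply Rle_lt_trans; [|exact Hv]. change (fold_right _ 0 bs) with (lsum bs (box_vol n)).
  rewrite (lsum_ext bs _ (fun e => 1 * box_vol n e)) by (intros; ring).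
  apply (sheared_box_cover_vol a L s Hs n bs); auto.
  - intros e He. split; [lra|auto].
  - intros x Hx. destruct (Hcov x (Hsub x Hx)) as [e [He Hin]].
    replace 1 with (1 * indic (in_box n e x)) at 1 by (rewrite indic_T; auto; ring).
    apply (lsum_ge_term bs (fun e => 1 * indic (in_box n e x))); auto.
    intros e' _. pose proof (indic_01 (in_box n e' x)). lra.
Qed.

(** * Pigeonhole principle on a grid *)

Lemma pigeonhole_nat N M (f : nat -> nat) : (N < M)%nat ->
  (forall i, (i < M)%nat -> (f i < N)%nat) -> exists i j, (i < j < M)%nat /\ f i = f j.
Proof.
  revert N f. induction M as [|M IH]; intros N f HNM Hf; [lia|].
  destruct (classic (exists i, (i < M)%nat /\ f i = f M)) as [[i [Hi E]]|Hnew].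
  { exists i, M. split; [lia|auto]. }
  assert (Hfresh : forall i, (i < M)%nat -> f i <> f M) by (intros i Hi E; apply Hnew; eauto).
  destruct N as [|N]; [specialize (Hf 0%nat ltac:(lia)); lia|].
  (* drop the value [f M] and shift the values above it down by one *)
  destruct (IH N (fun i => if Nat.ltb (f i) (f M) then f i else f i - 1)%nat)
    as [i [j [Hij E]]].
  - lia.
  - intros i Hi. pose proof (Hf i ltac:(lia)). pose proof (Hf M ltac:(lia)).
    pose proof (Hfresh i Hi). destruct (Nat.ltb_spec (f i) (f M)); lia.
  - exists i, j. split; [lia|].
    pose proof (Hfresh i ltac:(lia)). pose proof (Hfresh j ltac:(lia)).
    destruct (Nat.ltb_spec (f i) (f M)), (Nat.ltb_spec (f j) (f M)); lia.
Qed.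

Fixpoint prod_nat (n : nat) (K : nat -> nat) : nat :=
  match n with O => 1 | S k => prod_nat k K * K k end.

Lemma INR_prod_nat n K : INR (prod_nat n K) = prodR n (fun i => INR (K i)).
Proof. induction n; simpl prod_nat; cbn [prodR]; [reflexivity|]. now rewrite mult_INR, IHn. Qed.

Fixpoint mixed_code (n : nat) (K v : nat -> nat) : nat :=
  match n with O => 0 | S k => mixed_code k K v + v k * prod_nat k K end.

Lemma mixed_code_lt n K v : (forall i, (i < n)%nat -> (v i < K i)%nat) ->
  (mixed_code n K v < prod_nat n K)%nat.
Proof.
  induction n as [|n IH]; simpl; intros Hv; [lia|].
  pose proof (IH ltac:(intros; apply Hv; lia)). pose proof (Hv n ltac:(lia)). nia.
Qed.

Lemma mixed_code_inj n K v v' :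
  (forall i, (i < n)%nat -> (v i < K i)%nat /\ (v' i < K i)%nat) ->
  mixed_code n K v = mixed_code n K v' -> forall i, (i < n)%nat -> v i = v' i.
Proof.
  induction n as [|n IH]; simpl; intros Hv E i Hi; [lia|].
  assert (Hlt : forall u, (forall i, (i < n)%nat -> (u i < K i)%nat) ->
                  (mixed_code n K u < prod_nat n K)%nat) by (intros; now apply mixed_code_lt).
  pose proof (Hlt v ltac:(intros; apply Hv; lia)). pose proof (Hlt v' ltac:(intros; apply Hv; lia)).
  destruct (Nat.div_mod_unique (prod_nat n K) (v n) (v' n) (mixed_code n K v) (mixed_code n K v'))
    as [Ev Ec]; [lia..|].
  destruct (Nat.eq_dec i n) as [->|Hin]; auto.
  apply IH; [intros j Hj; apply Hv; lia | exact Ec | lia].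
Qed.

Definition digit (m N i : nat) : nat := (N / m ^ i mod m)%nat.

Lemma digit_div m u i : m <> 0%nat -> digit m (u / m) i = digit m u (S i).
Proof. intros Hm. unfold digit. now rewrite Nat.Div0.div_div. Qed.

Lemma digits_inj m n N N' : (N < m ^ n)%nat -> (N' < m ^ n)%nat ->
  (forall i, (i < n)%nat -> digit m N i = digit m N' i) -> N = N'.
Proof.
  revert N N'. induction n as [|n IH]; simpl; intros N N' HN HN' Hd; [lia|].
  assert (Hm : m <> 0%nat) by (intros ->; lia).
  assert (E0 : (N mod m = N' mod m)%nat).
  { specialize (Hd 0%nat ltac:(lia)). unfold digit in Hd.
    now rewrite Nat.pow_0_r, !Nat.div_1_r in Hd. }
  assert (E1 : (N / m = N' / m)%nat).
  { apply IH; try (apply Nat.Div0.div_lt_upper_bound; lia).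
    intros i Hi. rewrite !digit_div by auto. apply Hd. lia. }
  now rewrite (Nat.div_mod_eq N m), (Nat.div_mod_eq N' m), E0, E1.
Qed.

Lemma pigeonhole_grid n m (K : nat -> nat) (F : (nat -> nat) -> nat -> nat) :
  (prod_nat n K < m ^ n)%nat -> (forall p i, (i < n)%nat -> (F p i < K i)%nat) ->
  exists p q, (forall i, (i < n)%nat -> (p i < m)%nat /\ (q i < m)%nat) /\
    (exists i, (i < n)%nat /\ p i <> q i) /\ forall i, (i < n)%nat -> F p i = F q i.
Proof.
  intros Hlt HF.
  assert (Hm : m <> 0%nat) by (intros ->; destruct n; simpl in Hlt; lia).
  destruct (pigeonhole_nat (prod_nat n K) (m ^ n) (fun N => mixed_code n K (F (digit m N))))
    as [N [N' [HN E]]]; auto.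
  { intros N HN. apply mixed_code_lt. intros; now apply HF. }
  exists (digit m N), (digit m N'). split; [|split].
  - intros i Hi. split; now apply Nat.mod_upper_bound.
  - apply NNPP. intros Hno.
    enough (N = N') by lia.
    apply (digits_inj m n); try lia. intros i Hi.
    apply NNPP. intros Hne. apply Hno. eauto.
  - apply (mixed_code_inj n K); auto.
Qed.

(** * Minkowski's theorem for triangular lattices *)

Definition nat_floor (r : R) : nat := Z.to_nat (Int_part r).

Lemma nat_floor_spec r : 0 <= r -> INR (nat_floor r) <= r < INR (nat_floor r) + 1.
Proof.
  intros Hr. destruct (base_Int_part r) as [H1 H2].
  assert (H0 : (0 <= Int_part r)%Z).
  { assert (Hm1 : -1 < IZR (Int_part r)) by lra. apply lt_IZR in Hm1. lia. }
  unfold nat_floor. rewrite INR_IZR_INZ, Z2Nat.id by auto. lra.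
Qed.

Lemma floor_reduce z u : 0 < u -> 0 <= z - IZR (Int_part (z / u)) * u < u.
Proof.
  intros Hu. destruct (base_Int_part (z / u)) as [H1 H2].
  set (f := IZR (Int_part (z / u))) in *.
  replace z with (z / u * u) by (field; lra).
  split; [apply Rmult_le_compat_r with (r := u) in H1|]; nra.
Qed.

Lemma fine_grid n (rho : nat -> R) : (forall k, (k < n)%nat -> 0 <= rho k) ->
  prodR n rho < 1 -> exists m : nat, (0 < m)%nat /\
  prodR n (fun k => INR m * rho k + 1) < INR m ^ n.
Proof.
  intros Hrho Hprod.
  set (P1 := prodR n (fun k => rho k + 1)).
  assert (HP1 : 0 <= P1) by (apply prodR_nonneg; intros k Hk; pose proof (Hrho k Hk); lra).
  destruct (INR_archimed (1 - prodR n rho) (INR n * P1)) as [m Hm]; [lra|].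
  pose proof (pos_INR n).
  assert (Hm1 : 1 <= INR m).
  { destruct m as [|m]; [simpl in Hm; nra|]. rewrite S_INR. pose proof (pos_INR m). lra. }
  exists m. split; [apply INR_lt; simpl; lra|].
  rewrite (prodR_ext n _ (fun k => INR m * (rho k + / INR m))) by (intros; field; lra).
  rewrite prodR_scal. rewrite <- (Rmult_1_r (INR m ^ n)) at 2.
  apply Rmult_lt_compat_l; [apply pow_lt; lra|].
  eapply Rle_lt_trans; [apply prodR_add_small; auto|].
  - split; [apply Rlt_le, Rinv_0_lt_compat; lra|].
    rewrite <- Rinv_1. apply Rinv_le_contravar; lra.
  - fold P1. apply Rmult_lt_reg_l with (INR m); [lra|].
    replace (INR m * (prodR n rho + / INR m * INR n * P1)) with
      (INR m * prodR n rho + INR n * P1) by (field; lra).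
    nra.
Qed.

Lemma same_floor_close r r' : 0 <= r -> 0 <= r' -> nat_floor r = nat_floor r' ->
  Rabs (r - r') < 1.
Proof.
  intros Hr Hr' E. pose proof (nat_floor_spec r Hr). pose proof (nat_floor_spec r' Hr').
  rewrite E in *. apply Rabs_def1; lra.
Qed.

Lemma cell_index_lt (K : nat) z u : 0 < u -> 0 <= z < u -> (0 < K)%nat ->
  (nat_floor (INR K * (z / u)) < K)%nat.
Proof.
  intros Hu Hz HK. apply lt_0_INR in HK. apply INR_lt.
  assert (Hzu : 0 <= z / u < 1).
  { split; [apply Rle_mult_inv_pos; lra|].
    apply Rmult_lt_reg_r with u; auto. unfold Rdiv. rewrite Rmult_assoc, Rinv_l; lra. }
  pose proof (nat_floor_spec (INR K * (z / u)) ltac:(nra)). nra.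
Qed.

Lemma cell_close (K : nat) z z' u r : 0 < u -> 0 <= z -> 0 <= z' -> u < r * INR K ->
  nat_floor (INR K * (z / u)) = nat_floor (INR K * (z' / u)) -> Rabs (z - z') < r.
Proof.
  intros Hu Hz Hz' Hr E.
  assert (HK : 0 < INR K) by (pose proof (pos_INR K); destruct (Req_dec (INR K) 0); nra).
  assert (0 <= INR K * (z / u)) by (apply Rmult_le_pos; [lra | apply Rle_mult_inv_pos; lra]).
  assert (0 <= INR K * (z' / u)) by (apply Rmult_le_pos; [lra | apply Rle_mult_inv_pos; lra]).
  pose proof (same_floor_close _ _ H H0 E) as Hc.
  replace (INR K * (z / u) - INR K * (z' / u)) with ((z - z') * (INR K / u)) in Hc
    by (field; lra).
  rewrite Rabs_mult, (Rabs_right (INR K / u)) in Hc by (apply Rle_ge, Rle_mult_inv_pos; lra).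
  apply Rmult_lt_compat_r with (r := u / INR K) in Hc; [|apply Rdiv_lt_0_compat; lra].
  replace (Rabs (z - z') * (INR K / u) * (u / INR K)) with (Rabs (z - z')) in Hc
    by (field; lra).
  apply Rlt_le_trans with (u / INR K); [lra|].
  apply Rmult_le_reg_r with (INR K); auto.
  replace (u / INR K * INR K) with u by (field; lra). lra.
Qed.

Lemma INR_dist_le m p q : (p < m)%nat -> (q < m)%nat -> Rabs (INR p - INR q) <= INR m - 1.
Proof.
  intros Hp Hq. apply le_INR in Hp, Hq. rewrite S_INR in Hp, Hq.
  pose proof (pos_INR p). pose proof (pos_INR q). apply Rabs_le. lra.
Qed.

Lemma INR_dist_neq p q : p <> q -> 1 <= Rabs (INR p - INR q).
Proof.
  intros Hpq. destruct (Nat.lt_total p q) as [Hlt|[E|Hlt]]; [| contradiction |];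
    apply le_INR in Hlt; rewrite S_INR in Hlt.
  - rewrite Rabs_minus_sym, Rabs_right; lra.
  - rewrite Rabs_right; lra.
Qed.

Definition lattice_vec (n : nat) (L : mat) (c : zvec) : vec :=
  mvmul n (mtr L) (fun i => IZR (c i)).

Lemma lattice_vec_sub n L c c' k :
  lattice_vec n L (fun i => (c i - c' i)%Z) k = lattice_vec n L c k - lattice_vec n L c' k.
Proof.
  unfold lattice_vec, mvmul. rewrite <- sumR_minus. apply sumR_ext. intros; rewrite minus_IZR; ring.
Qed.

Section Minkowski.

Variables (n : nat) (L : mat) (d : R).
Hypotheses (Hd : 0 < d) (HL : lower_triangular n L) (Hdiag : forall k, (k < n)%nat -> 0 < L k k).

Lemma lattice_reduce (x : vec) : exists c : zvec,
  forall k, (k < n)%nat -> 0 <= x k - lattice_vec n L c k < L k k.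
Proof.
  (* fix the coordinates of [c] from the last one down, the triangular shape of [L]
     protecting the coordinates of [x] already reduced *)
  enough (H : forall t, (t <= n)%nat -> exists c : zvec,
             (forall i, (i < n - t)%nat -> c i = 0%Z) /\
             forall k, (n - t <= k < n)%nat -> 0 <= x k - lattice_vec n L c k < L k k).
  { destruct (H n (le_n n)) as [c [_ Hc]]. exists c. intros k Hk. apply Hc. lia. }
  induction t as [|t IH]; intros Ht.
  { exists (fun _ => 0%Z). split; [auto | intros; lia]. }
  destruct (IH ltac:(lia)) as [c [Hc0 Hc]].
  set (k0 := (n - S t)%nat).
  set (v := Int_part ((x k0 - lattice_vec n L c k0) / L k0 k0)).
  assert (Hlat : forall k,
    lattice_vec n L (upd c k0 v) k = lattice_vec n L c k + IZR v * L k0 k).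
  { intros k. unfold lattice_vec, mvmul, mtr.
    rewrite <- (sumR_delta n k0 (fun i => IZR v * L i k)), <- sumR_plus by lia.
    apply sumR_ext. intros i Hi. unfold upd.
    destruct (Nat.eqb_spec i k0), (Nat.eqb_spec k0 i); try lia.
    - subst i. rewrite Hc0 by lia. simpl. ring.
    - ring. }
  exists (upd c k0 v). split.
  - intros i Hi. rewrite upd_neq by lia. apply Hc0. lia.
  - intros k Hk. rewrite Hlat. destruct (Nat.eq_dec k k0) as [->|Hkk0].
    + pose proof (floor_reduce (x k0 - lattice_vec n L c k0) (L k0 k0) (Hdiag k0 ltac:(lia))).
      fold v in H. lra.
    + rewrite (HL k0 k), Rmult_0_r, Rplus_0_r by lia. apply Hc. lia.
Qed.

Lemma grid_pair_lattice_vec m (p q : nat -> nat) (c c' : zvec) : (0 < m)%nat ->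
  (forall k, (k < n)%nat -> (p k < m)%nat /\ (q k < m)%nat) ->
  (exists i, (i < n)%nat /\ p i <> q i) ->
  (forall k, (k < n)%nat ->
     Rabs ((d / INR m * INR (p k) - lattice_vec n L c k) -
           (d / INR m * INR (q k) - lattice_vec n L c' k)) < d / INR m) ->
  zvec_nonzero n (fun i => (c i - c' i)%Z) /\
  forall k, (k < n)%nat -> Rabs (lattice_vec n L (fun i => (c i - c' i)%Z) k) < d.
Proof.
  intros Hm Hpq [i0 [Hi0 Hne]] Hclose.
  set (h := d / INR m) in *.
  assert (Hh : 0 < h) by (apply Rdiv_lt_0_compat; [|apply lt_0_INR]; auto).
  assert (Hlat : forall k, lattice_vec n L (fun i => (c i - c' i)%Z) k =
            h * (INR (p k) - INR (q k)) -
            ((h * INR (p k) - lattice_vec n L c k) - (h * INR (q k) - lattice_vec n L c' k)))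
    by (intros; rewrite lattice_vec_sub; ring).
  split.
  - (* the grid points differ by at least [h] in coordinate [i0] *)
    apply NNPP. intros Hz.
    assert (Hc0 : lattice_vec n L (fun i => (c i - c' i)%Z) i0 = 0).
    { apply sumR_eq0. intros i Hi. replace (c i - c' i)%Z with 0%Z; [simpl; ring|].
      apply NNPP. intros Hci. apply Hz. exists i. auto. }
    pose proof (Hclose i0 Hi0) as Hy0. pose proof (INR_dist_neq _ _ Hne).
    rewrite Hlat in Hc0.
    replace (_ - _) with (h * (INR (p i0) - INR (q i0))) in Hy0 by lra.
    rewrite Rabs_mult, (Rabs_right h) in Hy0 by lra. nra.
  - intros k Hk. rewrite Hlat. unfold Rminus at 1.
    eapply Rle_lt_trans; [apply Rabs_triang|].
    rewrite Rabs_Ropp, Rabs_mult, (Rabs_right h) by lra.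
    pose proof (INR_dist_le m _ _ (proj1 (Hpq k Hk)) (proj2 (Hpq k Hk))).
    pose proof (Hclose k Hk).
    assert (h * INR m = d) by (unfold h; field; apply not_0_INR; lia).
    nra.
Qed.

Lemma minkowski_grid m (K : nat -> nat) : (0 < m)%nat -> (prod_nat n K < m ^ n)%nat ->
  (forall k, (k < n)%nat -> L k k < d / INR m * INR (K k)) ->
  exists c : zvec, zvec_nonzero n c /\
    forall k, (k < n)%nat -> Rabs (lattice_vec n L c k) < d.
Proof.
  intros Hm Hcount HK.
  (* reduce the points of the grid [(d / m) {0, ..., m-1}^n] into the fundamental domain
     [prod_k [0, L k k)], cut into [prod_k K k < m^n] cells of sides less than [d / m] *)
  destruct (choice (fun (p : nat -> nat) (c : zvec) => forall k, (k < n)%nat ->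
              0 <= d / INR m * INR (p k) - lattice_vec n L c k < L k k)) as [cp Hcp].
  { intros p. apply lattice_reduce. }
  set (y p k := d / INR m * INR (p k) - lattice_vec n L (cp p) k).
  assert (HK0 : forall k, (k < n)%nat -> (0 < K k)%nat).
  { intros k Hk. destruct (K k) eqn:E; [|lia]. specialize (HK k Hk).
    rewrite E in HK. simpl in HK. pose proof (Hdiag k Hk). lra. }
  destruct (pigeonhole_grid n m K (fun p k => nat_floor (INR (K k) * (y p k / L k k))))
    as [p [q [Hpq [Hne Hcell]]]]; [exact Hcount| |].
  { intros p k Hk. apply cell_index_lt; auto. apply Hcp. auto. }
  exists (fun i => (cp p i - cp q i)%Z). apply (grid_pair_lattice_vec m p q); auto.
  intros k Hk. pose proof (Hcp p k Hk). pose proof (Hcp q k Hk).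
  apply (cell_close (K k) _ _ (L k k)); [apply Hdiag; auto | lra | lra | apply HK; auto |].
  exact (Hcell k Hk).
Qed.

Lemma minkowski_triangular : prodR n (fun k => L k k) < d ^ n ->
  exists c : zvec, zvec_nonzero n c /\
    forall k, (k < n)%nat -> Rabs (lattice_vec n L c k) < d.
Proof.
  intros Hprod.
  destruct (fine_grid n (fun k => L k k / d)) as [m [Hm Hgrid]].
  { intros k Hk. apply Rlt_le, Rdiv_lt_0_compat; auto. }
  { now apply prodR_div_lt_1. }
  assert (Hm0 : 0 < INR m) by (apply lt_0_INR; auto).
  assert (Hh : 0 < d / INR m) by (apply Rdiv_lt_0_compat; auto).
  assert (HK : forall k, (k < n)%nat ->
             L k k / (d / INR m) < INR (S (nat_floor (L k k / (d / INR m)))) <=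
             INR m * (L k k / d) + 1).
  { intros k Hk. pose proof (Hdiag k Hk).
    replace (INR m * (L k k / d)) with (L k k / (d / INR m)) by (field; lra).
    rewrite S_INR. assert (0 <= L k k / (d / INR m)) by (apply Rlt_le, Rdiv_lt_0_compat; auto).
    pose proof (nat_floor_spec (L k k / (d / INR m))). lra. }
  apply (minkowski_grid m (fun k => S (nat_floor (L k k / (d / INR m))))); auto.
  - apply INR_lt. rewrite INR_prod_nat, pow_INR.
    eapply Rle_lt_trans; [|exact Hgrid]. apply prodR_le. intros k Hk.
    pose proof (HK k Hk). pose proof (pos_INR (S (nat_floor (L k k / (d / INR m))))). lra.
  - intros k Hk. destruct (HK k Hk) as [HK1 _].
    apply Rmult_lt_compat_l with (r := d / INR m) in HK1; auto.
    replace (d / INR m * (L k k / (d / INR m))) with (L k k) in HK1 by (field; lra). exact HK1.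
Qed.

End Minkowski.

Section Ellipsoid.

Variables (n : nat) (A Minv : mat) (a : vec).
Hypothesis Hinv : is_inverse n Minv (mmul n A (mtr A)).

Lemma ellipsoid_width_le (c : zvec) w : 0 <= w ->
  dot n (mvmul n (mtr A) (fun i => IZR (c i))) (mvmul n (mtr A) (fun i => IZR (c i)))
    <= (w / 2) ^ 2 ->
  width_dir_le n c (ellipsoid n A Minv a) w.
Proof.
  intros Hw Hc.
  assert (Hhalf : forall x, ellipsoid n A Minv a x ->
            Rabs (zdot n c (fun i => x i - a i)) <= w / 2).
  { intros x Hx.
    pose proof (ellipsoid_dir_sq_le n A Minv Hinv (fun i => IZR (c i)) (fun i => x i - a i)) as Hsq.
    pose proof (dot_nonneg n (mvmul n (mtr A) (fun i => IZR (c i)))).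
    unfold ellipsoid in Hx.
    change (zdot n c _) with (dot n (fun i => IZR (c i)) (fun i => x i - a i)).
    apply Rabs_le. split; nra. }
  intros x x' Hx Hx'.
  replace (zdot n c x - zdot n c x') with
    (zdot n c (fun i => x i - a i) - zdot n c (fun i => x' i - a i))
    by (unfold zdot; rewrite <- !sumR_minus; apply sumR_ext; intros; ring).
  pose proof (Hhalf x Hx). pose proof (Hhalf x' Hx').
  pose proof (Rle_abs (zdot n c (fun i => x i - a i))).
  pose proof (Rle_abs (- zdot n c (fun i => x' i - a i))). rewrite Rabs_Ropp in *. lra.
Qed.

Variables (L Q : mat).
Hypotheses (HL : lower_triangular n L) (Hdiag : forall k, (k < n)%nat -> 0 < L k k).
Hypotheses (HQ : orthonormal_rows n Q)
  (HA : forall i j, (i < n)%nat -> (j < n)%nat -> A i j = mmul n L Q i j).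

Lemma sheared_box_in_ellipsoid s x :
  INR n * (s * s) <= 1 -> sheared_box a L s n x -> ellipsoid n A Minv a x.
Proof.
  intros Hs [y Hy].
  (* [x - a = L y = A (Q^T y)] and [|Q^T y| = |y| <= sqrt n * s <= 1] *)
  unfold ellipsoid. eapply Rle_trans.
  - apply (ellipsoid_image_le n A Minv Hinv _ (mvmul n (mtr Q) y)).
    intros i Hi. rewrite (lq_mvmul n A L Q) by auto. destruct (Hy i Hi) as [_ ->].
    unfold mvmul. rewrite (sumR_trunc n (S i)) by (lia || (intros; rewrite HL by lia; ring)).
    ring.
  - rewrite orthonormal_tr_dot by auto.
    apply Rle_trans with (sumR n (fun _ => s * s)); [|rewrite sumR_const; lra].
    apply sumR_le. intros k Hk. destruct (Hy k Hk) as [Hyk _]. nra.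
Qed.

Hypothesis Hvol : vol_lt n (ellipsoid n A Minv a) 1.

Lemma ellipsoid_sheared_cube_vol s : 0 <= s -> INR n * (s * s) <= 1 ->
  prodR n (fun k => 2 * s * L k k) < 1.
Proof.
  intros Hs Hns. apply (vol_lt_sheared_box n (ellipsoid n A Minv a) 1 a L s Hs); auto.
  - intros k Hk. now apply Rlt_le, Hdiag.
  - intros x. now apply sheared_box_in_ellipsoid.
Qed.

Lemma ellipsoid_diag_prod_lt : (0 < n)%nat ->
  prodR n (fun k => L k k) < (sqrt (INR n) / 2) ^ n.
Proof.
  intros Hn. assert (Hsn : 0 < sqrt (INR n)) by (apply sqrt_lt_R0, lt_0_INR; auto).
  apply prodR_div_lt_1; [lra|].
  rewrite (prodR_ext n _ (fun k => 2 * / sqrt (INR n) * L k k)) by (intros; field; lra).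
  apply ellipsoid_sheared_cube_vol; [apply Rlt_le, Rinv_0_lt_compat; lra|].
  rewrite <- Rinv_mult, sqrt_sqrt by (apply pos_INR).
  right. field. apply not_0_INR. lia.
Qed.

Lemma lattice_vec_small_width (c : zvec) :
  (forall k, (k < n)%nat -> Rabs (lattice_vec n L c k) < sqrt (INR n) / 2) ->
  width_dir_le n c (ellipsoid n A Minv a) (INR n).
Proof.
  intros Hc. apply ellipsoid_width_le; [apply pos_INR|].
  (* [|A^T c| = |Q^T (L^T c)| = |L^T c|] *)
  rewrite (dot_ext n _ (mvmul n (mtr Q) (lattice_vec n L c))
                     _ (mvmul n (mtr Q) (lattice_vec n L c)))
    by (intros; split; apply (lq_tr_mvmul n A L Q); auto).
  rewrite orthonormal_tr_dot by auto.
  apply Rle_trans with (sumR n (fun _ => sqrt (INR n) / 2 * (sqrt (INR n) / 2))).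
  - apply sumR_le. intros k Hk. pose proof (Rabs_def2 _ _ (Hc k Hk)). nra.
  - rewrite sumR_const. right.
    replace (sqrt (INR n) / 2 * (sqrt (INR n) / 2)) with (INR n / 4)
      by (rewrite <- (sqrt_sqrt (INR n)) at 1 by apply pos_INR; field).
    field.
Qed.

End Ellipsoid.

Theorem mainTheorem11 (n : nat) (A Minv : mat) (a : vec) :
  is_inverse n Minv (mmul n A (mtr A)) ->
  vol_lt n (ellipsoid n A Minv a) 1 ->
  lattice_width_le n (ellipsoid n A Minv a) (INR n).
Proof.
  intros Hinv Hvol.
  destruct (lq_decomposition n A Minv Hinv) as [L [Q [HL [Hdiag [HQ HA]]]]].
  destruct (Nat.eq_dec n 0) as [->|Hn].
  { (* in dimension 0 the ellipsoid is the whole one-point space, of volume 1 *)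
    pose proof (ellipsoid_sheared_cube_vol 0 A Minv a Hinv L Q HL Hdiag HQ HA Hvol 0
                  (Rle_refl 0) ltac:(simpl; lra)) as Hvol0.
    simpl in Hvol0. lra. }
  assert (Hd : 0 < sqrt (INR n) / 2)
    by (apply Rdiv_lt_0_compat, Rlt_0_2; apply sqrt_lt_R0, lt_0_INR; lia).
  destruct (minkowski_triangular n L (sqrt (INR n) / 2) Hd HL Hdiag) as [c [Hc Hsmall]].
  { apply (ellipsoid_diag_prod_lt n A Minv a Hinv L Q HL Hdiag HQ HA Hvol). lia. }
  exists c. split; [exact Hc|].
  now apply (lattice_vec_small_width n A Minv a Hinv L Q HQ HA).
Qed.
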